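(* Let $0<\underline\beta<\bar\beta$, let $\mathcal P$ be a parameter set, let $G,\tilde G>0$ satisfy the approximation property (AP) of the context, let $a>1$ satisfy $\frac{G}{a}\big(\frac{\ln a}{\ln2}+3\big)^{3/2}\le1$, and let the models $\mathcal S_m$, $m\ge2$, be as in the context. Then there exists a constant $c_{\underline\beta,\bar\beta}>0$ such that for all $\beta\in[\underline\beta,\bar\beta]$, all $s\in\mathcal H(\beta,\mathcal P)$ and all $m\ge2$, $$\mathrm{KL}(s,\mathcal S_m)\le c_{\underline\beta,\bar\beta}\,\underline\lambda(m)^\beta.$$
   Context: $\psi(x)=\pi^{-1/2}e^{-x^2}$, $\psi_\sigma(x)=\sigma^{-1}\psi(x/\sigma)$; $\mathrm{KL}(s,t)=\int s\ln(s/t)$, $\mathrm{KL}(s,\mathcal S)=\inf_{t\in\mathcal S}\mathrm{KL}(s,t)$. For $\beta>0$, $r$ is the largest integer strictly less than $\beta$; a parameter set $\mathcal{P}=\{\gamma,l^+,L,\varepsilon,C,\alpha,\xi,M\}$ (polynomial $L$, positive constants) defines $\mathcal H(\beta,\mathcal P)$: probability densities $f$ with $\ln f$ $r$ times differentiable, $|(\ln f)^{(r)}(x)-(\ln f)^{(r)}(y)|\le r!L(x)|y-x|^{\beta-r}$ for $|x-y|\le\gamma$, $|(\ln f)^{(j)}(0)|\le l^+$; $\int|(\ln f)^{(j)}|^{(2\beta+\varepsilon)/j}f\le C$ ($j=1..r$), $\int|L|^{2+\varepsilon/\beta}f\le C$; $f\le M\psi$; $f>0$ nondecreasing on $(-\infty,-\alpha)$,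 nonincreasing on $(\alpha,\infty)$, $f\ge\xi$ on $[-\alpha,\alpha]$. (AP): for each $\beta\in[\underline\beta,\bar\beta]$ there are $\bar\sigma(\beta)\in(0,1)$ and $c_\beta>0$, both continuous in $\beta$, such that for all $f\in\mathcal H(\beta,\mathcal P)$ and $\sigma\in(0,\bar\sigma(\beta))$ there exists a mixture $\sum_{u=1}^{m'}p_u\psi_\sigma(\cdot-\mu_u)$ with $m'<G\sigma^{-1}|\ln\sigma|^{3/2}$, $|\mu_u|\le\tilde G|\ln\sigma|^{1/2}$ and $\mathrm{KL}(f,\cdot)\le c_\beta\sigma^{2\beta}$. Models: $\sqrt{\underline\lambda(m)}=a\,m^{-1}(\ln m)^{3/2}$, $\bar\mu(m)=\tilde G|\ln\sqrt{\underline\lambda(m)}|^{1/2}$, $\bar\lambda$ a constant with $\bar\lambda>\underline\lambda(m)$ for all $m$, and $\mathcal{S}_m=\{\sum_{u=1}^m p_u\psi_{\sigma_u}(\cdot-\mu_u):\mu_u\in[-\bar\mu(m),\bar\mu(m)],\ \sigma_u^2\in[\underline\lambda(m),\bar\lambda],\ p_u\in[0,1],\ \sum p_u=1\}$. *)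

From HB Require Import structures.
From mathcomp Require Import all_boot all_order all_algebra.
From mathcomp Require Import all_classical all_reals all_analysis.
Set Implicit Arguments. Unset Strict Implicit. Unset Printing Implicit Defensive.
Import Order.TTheory GRing.Theory Num.Theory numFieldNormedType.Exports.
Local Open Scope classical_set_scope.
Local Open Scope ring_scope.

Section defs.
Variable R : realType.

Definition psi (x : R) : R := (Num.sqrt pi)^-1 * expR (- x ^+ 2).
Definition psis (sigma x : R) : R := sigma^-1 * psi (x / sigma).

Definition KL (s t : R -> R) : \bar R :=
  (\int[@lebesgue_measure R]_(x in setT) (s x * ln (s x / t x))%:E)%E.

Definition KLset (s : R -> R) (S : set (R -> R)) : \bar R :=
  ereal_inf [set KL s t | t in S].

(* r = largest integer strictly less than beta (for beta > 0): ceil(beta) - 1 *)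
Definition rbeta (beta : R) : nat := `|(Num.ceil beta - 1)%R|%N.

Definition ntimes_diff (n : nat) (g : R -> R) : Prop :=
  forall k : nat, (k < n)%N -> forall x : R, derivable (derive1n k g) x 1.

Record param := Param {
  p_gamma : R; p_lplus : R; p_L : {poly R}; p_eps : R; p_C : R;
  p_alpha : R; p_xi : R; p_M : R }.

Definition param_ok (P : param) : Prop :=
  0 < p_gamma P /\ 0 < p_lplus P /\ 0 < p_eps P /\ 0 < p_C P /\
  0 < p_alpha P /\ 0 < p_xi P /\ 0 < p_M P.

Definition is_density (f : R -> R) : Prop :=
  measurable_fun setT f /\ (forall x, 0 <= f x) /\
  (\int[@lebesgue_measure R]_(x in setT) (f x)%:E = 1)%E.

Definition Hclass (beta : R) (P : param) (f : R -> R) : Prop :=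
  let r := rbeta beta in
  let lf := fun x => ln (f x) in
  let L := fun x => (p_L P).[x] in
  is_density f /\
  ntimes_diff r lf /\
  (forall x y, `|x - y| <= p_gamma P ->
     `|derive1n r lf x - derive1n r lf y| <=
       r`!%:R * L x * `|y - x| `^ (beta - r%:R)) /\
  (forall j : nat, (j <= r)%N -> `|derive1n j lf 0| <= p_lplus P) /\
  (forall j : nat, (1 <= j <= r)%N ->
     (\int[@lebesgue_measure R]_(x in setT)
        ((`|derive1n j lf x| `^ ((2 * beta + p_eps P) / j%:R)) * f x)%:E
        <= (p_C P)%:E)%E) /\
  (\int[@lebesgue_measure R]_(x in setT)
      ((`|L x| `^ (2 + p_eps P / beta)) * f x)%:E <= (p_C P)%:E)%E /\
  (forall x, f x <= p_M P * psi x) /\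
  (forall x, 0 < f x) /\
  (forall x y, x <= y < - p_alpha P -> f x <= f y) /\
  (forall x y, p_alpha P < x <= y -> f y <= f x) /\
  (forall x, - p_alpha P <= x <= p_alpha P -> p_xi P <= f x).

Definition mixture (m : nat) (p mu sigma : 'I_m -> R) : R -> R :=
  fun x => \sum_(u < m) p u * psis (sigma u) (x - mu u).

Definition weights (m : nat) (p : 'I_m -> R) : Prop :=
  (forall u, 0 <= p u <= 1) /\ \sum_(u < m) p u = 1.

Definition AP (lbeta ubeta G Gt : R) (P : param) : Prop :=
  exists sigbar c : R -> R,
    {within `[lbeta, ubeta], continuous sigbar} /\
    {within `[lbeta, ubeta], continuous c} /\
    forall beta, lbeta <= beta <= ubeta ->
      0 < sigbar beta < 1 /\ 0 < c beta /\
      forall f, Hclass beta P f ->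
      forall sigma, 0 < sigma < sigbar beta ->
      exists (m' : nat) (p mu : 'I_m' -> R),
        m'%:R < G * sigma^-1 * `|ln sigma| `^ (3/2) /\
        weights p /\
        (forall u, `|mu u| <= Gt * `|ln sigma| `^ (1/2)) /\
        (KL f (mixture p mu (fun _ => sigma)) <= (c beta * sigma `^ (2 * beta))%:E)%E.

Definition lamlow (a : R) (m : nat) : R :=
  (a * m%:R^-1 * ln m%:R `^ (3/2)) ^+ 2.
Definition mubar (Gt a : R) (m : nat) : R :=
  Gt * `|ln (Num.sqrt (lamlow a m))| `^ (1/2).

Definition Smodel (Gt a lambar : R) (m : nat) : set (R -> R) :=
  [set t | exists (p mu sigma : 'I_m -> R),
     t = mixture p mu sigma /\ weights p /\
     (forall u, - mubar Gt a m <= mu u <= mubar Gt a m) /\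
     (forall u, 0 < sigma u /\ lamlow a m <= sigma u ^+ 2 <= lambar)].

End defs.

From HB Require Import structures.
From mathcomp Require Import all_boot all_order all_algebra.
From mathcomp Require Import all_classical all_reals all_analysis.
From mathcomp Require Import measurable_realfun normal_distribution.
From mathcomp Require Import ring lra.
Import Order.TTheory GRing.Theory Num.Theory numFieldNormedType.Exports.
Set Implicit Arguments. Unset Strict Implicit. Unset Printing Implicit Defensive.
Local Open Scope classical_set_scope.
Local Open Scope ring_scope.

(* Write sigma_m := sqrt (lamlow a m). The AP threshold and constant are continuous
   in beta, hence bounded away from 0 and above on the compact range of beta, so AP
   holds uniformly. When m >= 4 and sigma_m is below the uniform threshold, AP at
   sigma_m gives a mixture of fewer than G sigma_m^-1 |ln sigma_m|^(3/2) <= m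
   components, with means within mubar m and common variance lamlow a m; padded with
   zero weights it lies in S_m, at KL distance at most c sigma_m^(2 beta) =
   c (lamlow a m)^beta. Otherwise lamlow a m is bounded below by a positive constant,
   and the single Gaussian psi_(sqrt lambar) of S_m suffices: its KL distance to any
   density s <= M psi is bounded, because ln (s / psi_sigma) grows at most
   quadratically and x^2 psi(x) is dominated by a multiple of the standard normal
   density. *)


Section gaussian_KL.
Variable R : realType.

Lemma sqr_mul_expRN_le (x : R) :
  x ^+ 2 * expR (- x ^+ 2) <= 2 * expR (- (x ^+ 2 / 2)).
Proof.
have -> : - x ^+ 2 = - (x ^+ 2 / 2) + - (x ^+ 2 / 2) by field.
rewrite expRD mulrA ler_wpM2r ?expR_ge0 // expRN.
have e0 : 0 < expR (x ^+ 2 / 2) := expR_gt0 _.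
rewrite -[leRHS](@mulfK _ (expR (x ^+ 2 / 2))) ?gt_eqF // ler_pM2r ?invr_gt0 //.
have := expR_ge1Dx (x ^+ 2 / 2); nra.
Qed.

Lemma le_integral_ge0_dominated d (T : measurableType d)
    (mu : {measure set T -> \bar R}) (f g : T -> R) :
  measurable_fun setT f -> measurable_fun setT g ->
  (forall x, 0 <= g x) -> (forall x, f x <= g x) ->
  (\int[mu]_(x in setT) (f x)%:E <= \int[mu]_(x in setT) (g x)%:E)%E.
Proof.
move=> mf mg g0 fg; rewrite integralE -[leRHS]sube0; apply: leeB.
  apply: (ge0_le_integral _ measurableT).
  - by move=> x _; exact: funepos_ge0.
  - by apply: measurable_funepos; exact/measurable_EFinP.
  - exact/measurable_EFinP.
  - by move=> x _; rewrite funeposE /= -EFin_max lee_fin ge_max fg g0.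
by apply: integral_ge0 => x _; exact: funeneg_ge0.
Qed.

Lemma integral_comb_densities d (T : measurableType d)
    (mu : {measure set T -> \bar R}) (f g : T -> R) (a b : R) :
  measurable_fun setT f -> measurable_fun setT g ->
  (forall x, 0 <= f x) -> (forall x, 0 <= g x) -> 0 <= a -> 0 <= b ->
  (\int[mu]_(x in setT) (f x)%:E = 1)%E ->
  (\int[mu]_(x in setT) (g x)%:E = 1)%E ->
  (\int[mu]_(x in setT) (a * f x + b * g x)%:E = (a + b)%:E)%E.
Proof.
move=> mf mg f0 g0 a0 b0 f1 g1.
have mEf : measurable_fun setT (EFin \o f) by exact/measurable_EFinP.
have mEg : measurable_fun setT (EFin \o g) by exact/measurable_EFinP.
under eq_integral => x _ do rewrite EFinD 2!EFinM.
rewrite ge0_integralD //; first last.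
- by apply: emeasurable_funM => //; exact: measurable_cst.
- by move=> x _; rewrite mule_ge0 ?lee_fin.
- by apply: emeasurable_funM => //; exact: measurable_cst.
- by move=> x _; rewrite mule_ge0 ?lee_fin.
rewrite !ge0_integralZl_EFin //; first by rewrite f1 g1 !mule1.
- by move=> x _; rewrite lee_fin.
- by move=> x _; rewrite lee_fin.
Qed.

Lemma ln_div_psis (sigma x y : R) : 0 < sigma -> 0 < y ->
  ln (y / psis sigma x) =
    ln y - ln (sigma^-1 / Num.sqrt pi) + (x / sigma) ^+ 2.
Proof.
move=> sigma0 y0; have c0 : 0 < sigma^-1 / Num.sqrt pi.
  by rewrite divr_gt0 ?invr_gt0 ?sqrtr_gt0 ?pi_gt0.
have -> : psis sigma x = expR (ln (sigma^-1 / Num.sqrt pi) - (x / sigma) ^+ 2).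
  by rewrite expRD lnK ?posrE // /psis /psi mulrA.
by rewrite ln_div ?posrE ?expR_gt0 // expRK opprB addrA addrAC.
Qed.

Lemma KL_integrand_le (M sigma x y : R) : 0 < M -> 0 < sigma -> 0 < y ->
  y <= M * psi x ->
  y * ln (y / psis sigma x) <=
    `|ln (M / Num.sqrt pi) - ln (sigma^-1 / Num.sqrt pi)| * y +
    2 * M / (sigma ^+ 2 * Num.sqrt pi) * expR (- (x ^+ 2 / 2)).
Proof.
move=> M0 sigma0 y0 yM.
have sqrtpi0 : 0 < Num.sqrt (pi : R) by rewrite sqrtr_gt0 pi_gt0.
set c := ln (sigma^-1 / Num.sqrt pi).
rewrite ln_div_psis // -/c.
have ln_y : ln y - c <= `|ln (M / Num.sqrt pi) - c|.
  apply: le_trans (ler_norm _); rewrite lerD2r.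
  apply: le_trans (_ : ln (M * psi x) <= _).
    by rewrite ler_ln ?posrE // (lt_le_trans y0).
  rewrite /psi mulrA lnM ?posrE ?expR_gt0 ?divr_gt0 // expRK gerDl oppr_le0.
  exact: sqr_ge0.
have quad : (x / sigma) ^+ 2 * y <=
    2 * M / (sigma ^+ 2 * Num.sqrt pi) * expR (- (x ^+ 2 / 2)).
  apply: le_trans (_ : (x / sigma) ^+ 2 * (M * psi x) <= _).
    by rewrite ler_wpM2l ?sqr_ge0.
  have -> : (x / sigma) ^+ 2 * (M * psi x) =
      M / (sigma ^+ 2 * Num.sqrt pi) * (x ^+ 2 * expR (- x ^+ 2)).
    by rewrite /psi; field; rewrite !gt_eqF.
  rewrite (_ : 2 * M / _ * _ =
    M / (sigma ^+ 2 * Num.sqrt pi) * (2 * expR (- (x ^+ 2 / 2)))); last by ring.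
  rewrite ler_wpM2l ?sqr_mul_expRN_le //.
  by rewrite divr_ge0 ?ltW // mulr_gt0 // exprn_gt0.
rewrite mulrDr [y * _ ^+ 2]mulrC.
apply: lerD => //.
by rewrite mulrC ler_wpM2r // ltW.
Qed.

Lemma KL_psis_bounded (M sigma : R) : 0 < M -> 0 < sigma ->
  exists2 K : R, 0 <= K & forall s : R -> R, measurable_fun setT s ->
    (forall x, 0 < s x) ->
    (\int[@lebesgue_measure R]_(x in setT) (s x)%:E = 1)%E ->
    (forall x, s x <= M * psi x) ->
    (KL s (psis sigma) <= K%:E)%E.
Proof.
move=> M0 sigma0.
pose A := `|ln (M / Num.sqrt pi) - ln (sigma^-1 / Num.sqrt pi)|.
pose B := 2 * M / (sigma ^+ 2 * Num.sqrt pi).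
have peak0 : 0 < normal_peak (1 : R) by rewrite normal_peak_gt0 ?oner_neq0.
have B0 : 0 <= B.
  by rewrite divr_ge0 ?mulr_ge0 ?sqr_ge0 ?sqrtr_ge0 // ltW.
have B'0 : 0 <= B / normal_peak 1 by rewrite divr_ge0 // ltW.
have A0 : 0 <= A := normr_ge0 _.
exists (A + B / normal_peak 1); first exact: addr_ge0.
move=> s ms s0 s1 sM.
have pdfE x : B * expR (- (x ^+ 2 / 2)) = B / normal_peak 1 * normal_pdf 0 1 x.
  rewrite /normal_pdf oner_eq0 /normal_fun subr0 expr1n mulNr.
  by rewrite mulrA divfK ?gt_eqF.
have mpdf := @measurable_normal_pdf R 0 1.
have dominated : (\int[@lebesgue_measure R]_(x in setT)
      (s x * ln (s x / psis sigma x))%:E <=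
    \int[@lebesgue_measure R]_(x in setT)
      (A * s x + B / normal_peak 1 * normal_pdf 0 1 x)%:E)%E.
  apply: le_integral_ge0_dominated.
  - apply: (eq_measurable_fun (fun x => s x * (ln (s x) -
        ln (sigma^-1 / Num.sqrt pi) + (x / sigma) ^+ 2))).
      by move=> x _; rewrite ln_div_psis.
    apply: measurable_funM => //; apply: measurable_funD.
      by apply: measurable_funB => //; exact: measurableT_comp (@measurable_ln R) ms.
    by apply: measurable_funX; exact: measurable_funM.
  - by apply: measurable_funD; exact: measurable_funM.
  - move=> x; apply: addr_ge0; first exact: mulr_ge0 A0 (ltW (s0 x)).
    exact: mulr_ge0 B'0 (normal_pdf_ge0 _ _ _).
  - by move=> x; rewrite -pdfE; exact: KL_integrand_le.
apply: le_trans dominated _.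
rewrite integral_comb_densities //.
- by move=> x; exact: ltW.
- by move=> x; exact: normal_pdf_ge0.
- exact: integral_normal_pdf.
Qed.

End gaussian_KL.

Section models.
Variable R : realType.

Lemma expR1_le4 : expR 1 <= 4 :> R.
Proof.
have e0 : 0 < expR (2^-1 : R) := expR_gt0 _.
have e2 : expR (2^-1 : R) <= 2.
  have := expR_ge1Dx (- 2^-1 : R); rewrite expRN => h.
  rewrite -[leLHS]invrK -[leRHS]invrK lef_pV2 ?posrE ?invr_gt0 //; lra.
have -> : (1 : R) = 2^-1 + 2^-1 by field.
rewrite expRD; nra.
Qed.

Lemma ln_nat_ge1 (m : nat) : (4 <= m)%N -> 1 <= ln (m%:R : R).
Proof.
move=> m4; rewrite -[leLHS](expRK 1) ler_ln ?posrE ?expR_gt0 ?ltr0n //.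
  by apply: le_trans expR1_le4 _; rewrite ler_nat.
exact: leq_trans m4.
Qed.

Lemma powR_ge1 (x p : R) : 0 <= p -> 1 <= x -> 1 <= x `^ p.
Proof. by move=> p0 x1; rewrite -(powRr0 x) ler_powR. Qed.

Lemma lamlow_gt0 (a : R) (m : nat) : 0 < a -> (2 <= m)%N -> 0 < lamlow a m.
Proof.
move=> a0 m2; have m0 : (0 < m)%N by exact: ltnW.
have lnm0 : 0 < ln (m%:R : R) by apply: ln_gt0; rewrite ltr1n.
by rewrite exprn_gt0 // !mulr_gt0 ?invr_gt0 ?ltr0n ?powR_gt0.
Qed.

Lemma sqrt_lamlow (a : R) (m : nat) : 0 < a -> (2 <= m)%N ->
  Num.sqrt (lamlow a m) = a / m%:R * ln (m%:R : R) `^ (3/2).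
Proof.
move=> a0 m2; rewrite sqrtr_sqr ger0_norm // !mulr_ge0 ?invr_ge0 ?powR_ge0 //.
exact: ltW.
Qed.

Lemma le_G_a (G a : R) : 0 < G -> 1 < a ->
  G / a * (ln a / ln 2 + 3) `^ (3/2) <= 1 -> G <= a.
Proof.
move=> G0 a1 Ga; have a0 : 0 < a := lt_trans ltr01 a1.
have lna0 : 0 <= ln a / ln 2.
  by apply: divr_ge0; apply: ln_ge0; [exact: ltW | rewrite ler1n].
rewrite -[leRHS]mul1r -ler_pdivrMr //; apply: le_trans _ Ga.
by apply: ler_peMr; [rewrite divr_ge0 ?ltW | apply: powR_ge1; lra].
Qed.

Lemma approx_size_le (G a : R) (m : nat) : 0 <= G <= a -> 1 <= a ->
  (4 <= m)%N -> Num.sqrt (lamlow a m) < 1 ->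
  G * (Num.sqrt (lamlow a m))^-1 * `|ln (Num.sqrt (lamlow a m))| `^ (3/2)
    <= m%:R.
Proof.
move=> /andP[G0 Ga] a1 m4 sigma1; set sigma := Num.sqrt _.
have a0 : 0 < a := lt_le_trans ltr01 a1.
have m2 : (2 <= m)%N by exact: leq_trans m4.
have m0 : 0 < (m%:R : R) by rewrite ltr0n (leq_trans _ m4).
have lnm1 := ln_nat_ge1 m4.
have lnm32 : 1 <= ln (m%:R : R) `^ (3/2) by apply: powR_ge1.
have sigmaE : sigma = a / m%:R * ln (m%:R : R) `^ (3/2) by exact: sqrt_lamlow.
have sigma_ge : m%:R^-1 <= sigma.
  rewrite sigmaE mulrAC -[leLHS]mul1r ler_wpM2r ?invr_ge0 ?ler0n //; nra.
have sigma0 : 0 < sigma by apply: lt_le_trans sigma_ge; rewrite invr_gt0.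
have ln_sigma : `|ln sigma| <= ln (m%:R : R).
  rewrite ler0_norm ?ln_le0 ?(ltW sigma1) // lerNl -lnV ?posrE //.
  by rewrite ler_ln ?posrE ?invr_gt0.
apply: le_trans (_ : G * sigma^-1 * ln (m%:R : R) `^ (3/2) <= _).
  rewrite ler_wpM2l ?mulr_ge0 ?invr_ge0 ?(ltW sigma0) //.
  by apply: ge0_ler_powR; rewrite ?nnegrE // (le_trans ler01 lnm1).
have -> : G * sigma^-1 * ln (m%:R : R) `^ (3/2) = G / a * m%:R.
  by rewrite sigmaE; field; rewrite !gt_eqF // (lt_le_trans ltr01).
by rewrite ler_piMl // ler_pdivrMr // mul1r.
Qed.

Lemma lamlow_cases (a smin : R) (m : nat) : 0 < a -> 0 <= smin -> (2 <= m)%N ->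
  ((3 < m)%N /\ Num.sqrt (lamlow a m) < smin) \/
  Num.min (smin ^+ 2) (Num.min (lamlow a 2) (lamlow a 3)) <= lamlow a m.
Proof.
move=> a0 smin0 m2; case: (leqP m 3) => [m3 | m4].
  by right; case: m m2 m3 => [|[|[|[|]]]] // _ _; rewrite !ge_min lexx !orbT.
case: (ltP (Num.sqrt (lamlow a m)) smin) => [lt_smin | ge_smin]; [by left | right].
rewrite ge_min -(sqr_sqrtr (ltW (lamlow_gt0 a0 m2))) ler_pXn2r ?nnegrE ?sqrtr_ge0 //.
by rewrite ge_smin.
Qed.

End models.

Section mixtures.
Variable R : realType.

Definition pad0 (m' m : nat) (f : 'I_m' -> R) (u : 'I_m) : R :=
  oapp f 0 (insub (val u)).
Arguments pad0 {m'} m f u.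

Lemma sum_pad0 (m' m : nat) (F : 'I_m' -> R) : (m' <= m)%N ->
  \sum_(u < m) pad0 m F u = \sum_(v < m') F v.
Proof.
move=> mm; pose G n := oapp F 0 (insub n).
have -> : \sum_(v < m') F v = \sum_(v < m') G v.
  by apply: eq_bigr => v _; rewrite /G valK.
rewrite (big_ord_widen m G mm) [RHS]big_mkcond; apply: eq_bigr => u _.
by rewrite /pad0 /G; case: insubP => [v -> _ | /negbTE ->].
Qed.

Lemma mixture_pad0 (m' m : nat) (p mu : 'I_m' -> R) (sigma : R) : (m' <= m)%N ->
  mixture (pad0 m p) (pad0 m mu) (fun _ => sigma) = mixture p mu (fun _ => sigma).
Proof.
move=> mm; apply: funext => x; rewrite /mixture -(sum_pad0 _ mm).
by apply: eq_bigr => u _; rewrite /pad0; case: insub => [v|] /=; rewrite ?mul0r.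
Qed.

Lemma weights_pad0 (m' m : nat) (p : 'I_m' -> R) : (m' <= m)%N ->
  weights p -> weights (pad0 m p).
Proof.
move=> mm [p01 p1]; split; last by rewrite sum_pad0.
by move=> u; rewrite /pad0; case: insub => [v|] /=; rewrite ?lexx ?ler01.
Qed.

Lemma Smodel_mixture (Gt a lambar sigma : R) (m' m : nat) (p mu : 'I_m' -> R) :
  0 <= Gt -> (m' <= m)%N -> weights p -> (forall u, `|mu u| <= mubar Gt a m) ->
  0 < sigma -> lamlow a m <= sigma ^+ 2 <= lambar ->
  Smodel Gt a lambar m (mixture p mu (fun _ => sigma)).
Proof.
move=> Gt0 mm wp mu_le sigma0 sigma_range.
have mubar0 : 0 <= mubar Gt a m by rewrite mulr_ge0 ?powR_ge0.
exists (pad0 m p), (pad0 m mu), (fun _ => sigma).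
split; first by rewrite mixture_pad0.
split; first exact: weights_pad0.
split=> // u; rewrite /pad0; case: insub => [v|] /=; last by rewrite oppr_le0 mubar0.
by rewrite -ler_norml.
Qed.

Lemma mixture1 (sigma : R) :
  mixture (fun _ : 'I_1 => 1) (fun _ => 0) (fun _ => sigma) = psis sigma.
Proof. by apply: funext => x; rewrite /mixture big_ord1 mul1r subr0. Qed.

Lemma KLset_le_KL (s t : R -> R) (S : set (R -> R)) :
  S t -> (KLset s S <= KL s t)%E.
Proof. by move=> St; apply: ereal_inf_lbound; exists t. Qed.

End mixtures.

Lemma sqrt_powR2 (R : realType) (x beta : R) : 0 <= x ->
  Num.sqrt x `^ (2 * beta) = x `^ beta.
Proof. by move=> x0; rewrite -powR12_sqrt // -powRrM; congr (_ `^ _); field. Qed.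

Lemma ler_scale_powR (R : realType) (K l x beta ub : R) :
  0 <= K -> 0 < l <= 1 -> l <= x -> 0 <= beta <= ub ->
  K <= K / l `^ ub * x `^ beta.
Proof.
move=> K0 /andP[l0 l1] lx /andP[beta0 beta_ub].
have lub0 : 0 < l `^ ub := powR_gt0 _ l0.
rewrite -{1}(divfK (lt0r_neq0 lub0) K) ler_wpM2l ?divr_ge0 ?(ltW lub0) //.
apply: le_trans (_ : l `^ beta <= _); first by rewrite ger_powR ?l0.
by apply: ge0_ler_powR; rewrite // nnegrE ltW // (lt_le_trans l0).
Qed.

Section model_bounds.
Variables (R : realType) (Gt a lambar : R).
Hypotheses (Gt0 : 0 <= Gt) (a0 : 0 < a).
Hypothesis lamlow_lt : forall m : nat, (2 <= m)%N -> lamlow a m < lambar.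

Lemma KLset_Smodel_le_psis (s : R -> R) (m : nat) : (2 <= m)%N ->
  (KLset s (Smodel Gt a lambar m) <= KL s (psis (Num.sqrt lambar)))%E.
Proof.
move=> m2; have lam_lt := lamlow_lt m2; have lam0 := lamlow_gt0 a0 m2.
rewrite -mixture1; apply/KLset_le_KL/Smodel_mixture => //.
- exact: ltnW.
- by split=> [u|]; rewrite ?big_ord1 ?lexx ?ler01.
- by move=> u; rewrite normr0 mulr_ge0 ?powR_ge0.
- by rewrite sqrtr_gt0 (lt_trans lam0).
- by rewrite sqr_sqrtr ?lexx ?(ltW lam_lt) ?(ltW (lt_trans lam0 lam_lt)).
Qed.

Lemma KLset_Smodel_le_approx (G c beta : R) (s : R -> R) (m : nat) :
  0 <= G <= a -> 1 <= a -> (4 <= m)%N -> Num.sqrt (lamlow a m) < 1 ->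
  (exists (m' : nat) (p mu : 'I_m' -> R),
    m'%:R < G * (Num.sqrt (lamlow a m))^-1 *
      `|ln (Num.sqrt (lamlow a m))| `^ (3/2) /\
    weights p /\
    (forall u, `|mu u| <= Gt * `|ln (Num.sqrt (lamlow a m))| `^ (1/2)) /\
    (KL s (mixture p mu (fun _ => Num.sqrt (lamlow a m))) <=
      (c * Num.sqrt (lamlow a m) `^ (2 * beta))%:E)%E) ->
  (KLset s (Smodel Gt a lambar m) <= (c * lamlow a m `^ beta)%:E)%E.
Proof.
move=> Ga a1 m4 sigma1 [m' [p [mu [size_lt [wp [mu_le KL_le]]]]]].
have m2 : (2 <= m)%N by exact: leq_trans m4.
have lam0 := lamlow_gt0 a0 m2.
have m'm : (m' <= m)%N.
  rewrite -(ler_nat R) ltW //; apply: lt_le_trans size_lt _.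
  exact: approx_size_le.
rewrite -sqrt_powR2 ?(ltW lam0) //; apply: le_trans KL_le.
apply/KLset_le_KL/Smodel_mixture => //; first by rewrite sqrtr_gt0.
by rewrite sqr_sqrtr ?lexx ?(ltW lam0) // ltW // lamlow_lt.
Qed.

End model_bounds.

Lemma AP_uniform (R : realType) (lbeta ubeta G Gt : R) (P : param R) :
  lbeta <= ubeta -> AP lbeta ubeta G Gt P ->
  exists smin cmax : R, 0 < smin < 1 /\ 0 < cmax /\
    forall beta, lbeta <= beta <= ubeta -> forall f, Hclass beta P f ->
    forall sigma, 0 < sigma < smin ->
    exists (m' : nat) (p mu : 'I_m' -> R),
      m'%:R < G * sigma^-1 * `|ln sigma| `^ (3/2) /\
      weights p /\
      (forall u, `|mu u| <= Gt * `|ln sigma| `^ (1/2)) /\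
      (KL f (mixture p mu (fun _ => sigma)) <= (cmax * sigma `^ (2 * beta))%:E)%E.
Proof.
move=> lbub [sb [cf [sb_cont [cf_cont approx]]]].
have inI t : (t \in `[lbeta, ubeta]) = (lbeta <= t <= ubeta) by rewrite in_itv.
have [b0 b0I sb_min] := EVT_min lbub sb_cont.
have [b1 b1I cf_max] := EVT_max lbub cf_cont.
rewrite inI in b0I b1I.
have [sb0 _] := approx b0 b0I; have [_ [cf0 _]] := approx b1 b1I.
exists (sb b0), (cf b1); do 2 split => //.
move=> beta beta_in f Hf sigma /andP[sigma0 sigma_lt].
have [_ [_ approx_f]] := approx beta beta_in.
have [m' [p [mu [size_lt [wp [mu_le KL_le]]]]]] := approx_f f Hf sigma
  (introT andP (conj sigma0 (lt_le_trans sigma_lt (sb_min _ (etrans (inI _) beta_in))))).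
exists m', p, mu; do 3 split => //; apply: le_trans KL_le _.
by rewrite lee_fin ler_wpM2r ?powR_ge0 // cf_max ?inI.
Qed.

Theorem lemma7 (R : realType) (lbeta ubeta : R) (P : param R) (G Gt a lambar : R) :
  0 < lbeta -> lbeta < ubeta -> param_ok P ->
  0 < G -> 0 < Gt -> AP lbeta ubeta G Gt P ->
  1 < a -> G / a * (ln a / ln 2 + 3) `^ (3/2) <= 1 ->
  (forall m : nat, (2 <= m)%N -> lamlow a m < lambar) ->
  exists c : R, 0 < c /\
    forall beta, lbeta <= beta <= ubeta ->
    forall s, Hclass beta P s ->
    forall m : nat, (2 <= m)%N ->
      (KLset s (Smodel Gt a lambar m) <= (c * lamlow a m `^ beta)%:E)%E.
Proof.
move=> lb0 lbub Pok G0 Gt0 HAP a1 Ga_cond lam_lt.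
have a0 : 0 < a := lt_trans ltr01 a1.
have Ga : 0 <= G <= a by rewrite (ltW G0) (le_G_a G0 a1 Ga_cond).
have [smin [cmax [/andP[smin0 smin1] [cmax0 approx]]]] := AP_uniform (ltW lbub) HAP.
have M0 : 0 < p_M P by case: Pok => [_ [_ [_ [_ [_ [_ ->]]]]]].
have lambar0 : 0 < Num.sqrt lambar.
  by rewrite sqrtr_gt0 (lt_trans (lamlow_gt0 a0 (leqnn 2)) (lam_lt 2%N isT)).
have [K K0 KL_psis_le] := KL_psis_bounded M0 lambar0.
pose l0 := Num.min (smin ^+ 2) (Num.min (lamlow a 2) (lamlow a 3)).
have l0_range : 0 < l0 <= 1.
  by rewrite !lt_min exprn_gt0 ?lamlow_gt0 // ge_min expr_le1 ?(ltW smin0) ?(ltW smin1).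
exists (cmax + K / l0 `^ ubeta); split=> [|beta beta_in s Hs m m2].
  by apply: lt_le_trans cmax0 _; rewrite lerDl divr_ge0 ?powR_ge0.
have beta_range : 0 <= beta <= ubeta.
  by case/andP: beta_in => lb_beta ->; rewrite (le_trans (ltW lb0)).
have [[m4 sigma_lt] | l0_le] := lamlow_cases a0 (ltW smin0) m2.
  apply: le_trans (KLset_Smodel_le_approx (ltW Gt0) a0 lam_lt Ga (ltW a1) m4
    (lt_trans sigma_lt smin1) (approx beta beta_in s Hs _ _)) _.
    by rewrite sqrtr_gt0 lamlow_gt0.
  by rewrite lee_fin ler_wpM2r ?powR_ge0 // lerDl divr_ge0 ?powR_ge0.
have [[ms [_ s1]] [_ [_ [_ [_ [_ [sM [s0 _]]]]]]]] := Hs.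
apply: le_trans (KLset_Smodel_le_psis (ltW Gt0) a0 lam_lt s m2) _.
apply: le_trans (KL_psis_le s ms s0 s1 sM) _; rewrite lee_fin.
apply: le_trans (ler_scale_powR K0 l0_range l0_le beta_range) _.
by rewrite ler_wpM2r ?powR_ge0 // lerDr ltW.
Qed.
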